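(* Let $\sigma\in\Sigma$ satisfy, for all contests $c\in\mathcal{C}$, candidates $i\in\mathcal{N}_c$ and integers $n\in\mathbb{N}$: $\sigma^n(i)\in\mathcal{N}_c$ if and only if $\sigma^n(i)=i$. Then there exist $B\in\mathbb{N}$ and a deck $\beta_1,\ldots,\beta_B\in\mathscr{B}$ such that $T^*_i(\beta_1,\ldots,\beta_B)\ge1$ for all $i\in\mathcal{N}$; $T^*_i(\beta_1,\ldots,\beta_B)\neq T^*_j(\beta_1,\ldots,\beta_B)$ for all $c\in\mathcal{C}$ and distinct $i,j\in\mathcal{N}_c$; and $T^\sigma(\beta_1,\ldots,\beta_B)=T^*(\beta_1,\ldots,\beta_B)$.
   Context: A ballot style consists of contests $\mathcal{C}=\{1,\ldots,C\}$, candidates $\mathcal{N}=\{1,\ldots,N\}$ partitioned into nonempty sets $\mathcal{N}_c$ ($c\in\mathcal{C}$), and positive integers $v_c$. A filled-out ballot is a subset $\beta\subseteq\mathcal{N}$; $\mathscr{B}=\{\beta\subseteq\mathcal{N}: |\mathcal{N}_c\cap\beta|\le v_c\ \forall c\}$. For $i\in\mathcal{N}_c$: $T^*_i(\beta_1,\ldots,\beta_B)=\sum_{b=1}^B\mathbb{I}\{i\in\beta_b\text{ and }|\mathcal{N}_c\cap\beta_b|\le v_c\}$, and for a bijection $\sigma$ of $\mathcal{N}$, $T^\sigma_i(\beta_1,\ldots,\beta_B)=\sum_{b=1}^B\mathbb{I}\{\sigma(i)\in\beta_b\text{ and }|\{\sigma(j)\in\beta_b: j\in\mathcal{N}_c\}|\le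 v_c\}$. $\Sigma$ is the set of non-identity bijections $\mathcal{N}\to\mathcal{N}$. $\sigma^n$ denotes the $n$-fold composition of $\sigma$. *)

(* Ballot style: candidates 'I_N, contests 'I_C,
   contest : 'I_N -> 'I_C gives the partition (N_c = contest^-1 c),
   v : 'I_C -> nat the vote limits. A deck is a seq of ballots. *)
From mathcomp Require Import all_boot all_fingroup.
Set Implicit Arguments. Unset Strict Implicit. Unset Printing Implicit Defensive.

Definition valid_ballot (N C : nat) (contest : 'I_N -> 'I_C) (v : 'I_C -> nat)
  (beta : {set 'I_N}) : bool :=
  [forall c : 'I_C, #|[set j in beta | contest j == c]| <= v c].

Definition Tstar (N C : nat) (contest : 'I_N -> 'I_C) (v : 'I_C -> nat)
  (deck : seq {set 'I_N}) (i : 'I_N) : nat :=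
  count (fun beta : {set 'I_N} => (i \in beta) &&
          (#|[set j in beta | contest j == contest i]| <= v (contest i))) deck.

Definition Tsigma (N C : nat) (contest : 'I_N -> 'I_C) (v : 'I_C -> nat)
  (sigma : {perm 'I_N}) (deck : seq {set 'I_N}) (i : 'I_N) : nat :=
  count (fun beta : {set 'I_N} => (sigma i \in beta) &&
          (#|[set j : 'I_N | (contest j == contest i) && (sigma j \in beta)]|
             <= v (contest i))) deck.

From mathcomp Require Import all_boot all_fingroup.
Set Implicit Arguments. Unset Strict Implicit. Unset Printing Implicit Defensive.

(* Use a deck consisting only of singleton ballots {k}: such a
   ballot is valid because it selects at most one candidate per contest
   (and v_c >= 1), and it counts exactly once for k, both in T^star and in
   T^sigma for the candidate sigma^-1(k).  If candidate k receives m k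
   copies of {k}, then T^star_i = m i and T^sigma_i = m (sigma i).
   We choose m i := 1 + (the rank of the sigma-orbit of i among
   all sets of candidates).  Then every
   tally is positive, m is sigma-invariant (whence T^sigma = T^star), and two
   distinct candidates of one contest lie in distinct orbits by the
   hypothesis on sigma, hence receive distinct tallies. *)

Definition singleton_deck (T : finType) (m : T -> nat) : seq {set T} :=
  flatten [seq nseq (m k) [set k] | k <- enum T].

Lemma count_flatten_singletons (T : finType) (m : T -> nat)
    (a : pred {set T}) (x0 : T) (s : seq T) :
  (forall k, a [set k] = (k == x0)) -> uniq s ->
  count a (flatten [seq nseq (m k) [set k] | k <- s])
    = if x0 \in s then m x0 else 0.
Proof.
move=> a_set1; elim: s => [|k s IHs] //= /andP [k_notin_s uniq_s].
rewrite count_cat count_nseq a_set1 IHs // in_cons.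
case: (eqVneq k x0) => [<- | _] /=; last by rewrite mul0n.
by rewrite (negbTE k_notin_s) mul1n addn0.
Qed.

Lemma count_singleton_deck (T : finType) (m : T -> nat) (a : pred {set T})
    (x0 : T) :
  (forall k, a [set k] = (k == x0)) -> count a (singleton_deck m) = m x0.
Proof.
by move=> a_set1; rewrite /singleton_deck (count_flatten_singletons _ a_set1)
  ?enum_uniq ?mem_enum.
Qed.

Lemma card_sub_set1 (T : finType) (k : T) (P : pred T) :
  #|[set j in [set k] | P j]| <= 1.
Proof.
rewrite -(cards1 k); apply: subset_leq_card.
by apply/subsetP => j; rewrite inE => /andP [].
Qed.

Section SingletonDeck.

Variables (N C : nat) (contest : 'I_N -> 'I_C) (v : 'I_C -> nat).
Hypothesis v_pos : forall c : 'I_C, 0 < v c.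

Lemma singleton_deck_valid (m : 'I_N -> nat) :
  all (valid_ballot contest v) (singleton_deck m).
Proof.
apply/allP => b /flattenP [s /mapP [k _ ->]] /nseqP [-> _].
by apply/forallP => c; apply: leq_trans (card_sub_set1 _ _) (v_pos c).
Qed.

Lemma Tstar_singleton_deck (m : 'I_N -> nat) (i : 'I_N) :
  Tstar contest v (singleton_deck m) i = m i.
Proof.
apply: count_singleton_deck => k; rewrite inE eq_sym.
case: eqP => //= ->; exact: leq_trans (card_sub_set1 _ _) (v_pos _).
Qed.

Lemma Tsigma_singleton_deck (sigma : {perm 'I_N}) (m : 'I_N -> nat)
    (i : 'I_N) :
  Tsigma contest v sigma (singleton_deck m) i = m (sigma i).
Proof.
apply: count_singleton_deck => k; rewrite inE.
case: (eqVneq k (sigma i)) => //= ->.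
apply: leq_trans _ (v_pos _); rewrite -(cards1 i); apply: subset_leq_card.
by apply/subsetP => j; rewrite !inE => /andP [_ /eqP /perm_inj ->].
Qed.

End SingletonDeck.

Definition orbit_label (T : finType) (sigma : {perm T}) (i : T) : nat :=
  (enum_rank (porbit sigma i)).+1.

Lemma orbit_label_perm (T : finType) (sigma : {perm T}) (i : T) :
  orbit_label sigma (sigma i) = orbit_label sigma i.
Proof. by rewrite /orbit_label -(expg1 sigma) porbit_perm. Qed.

Lemma orbit_label_eq (T : finType) (sigma : {perm T}) (i j : T) :
  orbit_label sigma i = orbit_label sigma j -> exists n, j = (sigma ^+ n)%g i.
Proof.
move=> [] /ord_inj /enum_rank_inj same_orbit.
by apply/porbitP; rewrite same_orbit porbit_id.
Qed.

Theorem theorem4 (N C : nat) (contest : 'I_N -> 'I_C) (v : 'I_C -> nat)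
  (contest_nonempty : forall c : 'I_C, exists i : 'I_N, contest i = c)
  (v_pos : forall c : 'I_C, 0 < v c)
  (sigma : {perm 'I_N}) (sigma_nonid : sigma != 1%g)
  (hsig : forall (i : 'I_N) (n : nat),
      contest ((sigma ^+ n)%g i) = contest i <-> (sigma ^+ n)%g i = i) :
  exists deck : seq {set 'I_N},
    all (valid_ballot contest v) deck /\
    (forall i : 'I_N, 1 <= Tstar contest v deck i) /\
    (forall i j : 'I_N, contest i = contest j -> i != j ->
        Tstar contest v deck i != Tstar contest v deck j) /\
    (forall i : 'I_N, Tsigma contest v sigma deck i = Tstar contest v deck i).
Proof.
exists (singleton_deck (orbit_label sigma)).
split; first exact: singleton_deck_valid.
split; first by move=> i; rewrite Tstar_singleton_deck.
split.
  move=> i j same_contest i_neq_j; rewrite !Tstar_singleton_deck //.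
  apply: contraNneq i_neq_j => /orbit_label_eq [n j_iterate].
  have [fixes_i _] := hsig i n.
  by rewrite j_iterate fixes_i // -j_iterate.
by move=> i; rewrite Tsigma_singleton_deck // Tstar_singleton_deck //
  orbit_label_perm.
Qed.
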